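(* Let $X$ be a nominal $\mathrm{Perm}$-set and $Y$ a nominal $\mathrm{Sb}$-set. (1) If $\dim(X)\le 1$, then the unit $\eta_X\colon X\to UF(X)$, $\eta_X(x)=[\mathrm{id},x]$, is an isomorphism. (2) If $\dim(Y)\le 1$, then the counit $\epsilon_Y\colon FU(Y)\to Y$, $\epsilon_Y([m,y])=m\cdot y$, is an isomorphism.
   Context: Atoms $\mathbb{A}$ (countably infinite); $\mathrm{Sb}$ = monoid of functions $\mathbb{A}\to\mathbb{A}$ that are the identity outside a finite set, under composition; $\mathrm{Perm}\subseteq\mathrm{Sb}$ the bijections. For $M\in\{\mathrm{Sb},\mathrm{Perm}\}$: nominal $M$-sets are sets with $M$-action in which every $x$ has a finite support $C\subseteq\mathbb{A}$ (meaning $m_1|_C=m_2|_C\Rightarrow m_1x=m_2x$ for $m_i\in M$); each $x$ has a least finite support $\mathrm{supp}(x)$; $\dim(X)=\max_x|\mathrm{supp}(x)|$. $U$ forgets from nominal $\mathrm{Sb}$-sets to nominal $\mathrm{Perm}$-sets. For a nominal $\mathrm{Perm}$-set $X$, $F(X)=(\mathrm{Sb}\times X)/{\sim}$, $\sim$ the least equivalence containing $(m,gx)\sim(mg,x)$ ($g\in\mathrm{Perm}$) and $(m,x)\sim(m',x)$ if $m|_C=m'|_C$ for some $\mathrm{Perm}$-support $C$ of $x$; classes $[m,x]$, action $n\cdot[m,x]=[nm,x]$. $F$ is left adjoint to $U$ with the stated unit and counit. *)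

(* Atoms = nat; finite sets of atoms = lists. *)
From Stdlib Require Import List Relations ClassicalEpsilon.
Import ListNotations.

Definition atom := nat.

Definition fin_nontriv (f : atom -> atom) : Prop :=
  exists C : list atom, forall a, ~ In a C -> f a = a.

Record Sb := mkSb { sb_fun :> atom -> atom; sb_finite : fin_nontriv sb_fun }.

Lemma fin_id : fin_nontriv (fun a => a).
Proof. exists []; auto. Qed.
Definition sb_id : Sb := @mkSb (fun a => a) fin_id.

Lemma fin_comp (m n : Sb) : fin_nontriv (fun a => m (n a)).
Proof.
  destruct (sb_finite m) as [C HC]; destruct (sb_finite n) as [D HD].
  exists (C ++ D); intros a Ha.
  rewrite HD; [apply HC|]; intro; apply Ha; apply in_or_app; auto.
Qed.
Definition sb_comp (m n : Sb) : Sb := @mkSb (fun a => m (n a)) (fin_comp m n).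

Definition is_bij {A B : Type} (f : A -> B) : Prop :=
  (forall a b, f a = f b -> a = b) /\ (forall b, exists a, f a = b).

Record Perm := mkPerm { perm_sb :> Sb; perm_bij : is_bij (sb_fun perm_sb) }.

Lemma bij_id : is_bij (sb_fun sb_id).
Proof. split; [auto | intros b; exists b; reflexivity]. Qed.
Definition perm_id : Perm := @mkPerm sb_id bij_id.

Lemma bij_comp (g h : Perm) : is_bij (sb_fun (sb_comp g h)).
Proof.
  destruct (perm_bij g) as [ig sg]; destruct (perm_bij h) as [ih sh].
  split; simpl.
  - intros a b E; auto.
  - intros b; destruct (sg b) as [c Hc]; destruct (sh c) as [a Ha].
    exists a; rewrite Ha; exact Hc.
Qed.
Definition perm_comp (g h : Perm) : Perm := @mkPerm (sb_comp g h) (bij_comp g h).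

Definition agree_on (C : list atom) (f g : atom -> atom) : Prop :=
  forall a, In a C -> f a = g a.

Definition sb_supports {X : Type} (act : Sb -> X -> X) (C : list atom) (x : X) :=
  forall m1 m2 : Sb, agree_on C m1 m2 -> act m1 x = act m2 x.
Definition perm_supports {X : Type} (act : Perm -> X -> X) (C : list atom) (x : X) :=
  forall g1 g2 : Perm, agree_on C g1 g2 -> act g1 x = act g2 x.

Definition least_support (supp : list atom -> Prop) (C : list atom) : Prop :=
  supp C /\ forall D, supp D -> incl C D.

Record NomPerm := {
  pcar :> Type;
  pact : Perm -> pcar -> pcar;
  pact_id : forall x, pact perm_id x = x;
  pact_comp : forall g h x, pact (perm_comp g h) x = pact g (pact h x);
  pact_fin : forall x, exists C, perm_supports pact C x }.

Record NomSb := {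
  scar :> Type;
  sact : Sb -> scar -> scar;
  sact_id : forall x, sact sb_id x = x;
  sact_comp : forall m n x, sact (sb_comp m n) x = sact m (sact n x);
  sact_fin : forall x, exists C, sb_supports sact C x }.

Definition dim_le1_perm (X : NomPerm) : Prop :=
  forall x : X, exists C, least_support (fun D => perm_supports (pact X) D x) C
                          /\ length C <= 1.
Definition dim_le1_sb (Y : NomSb) : Prop :=
  forall y : Y, exists C, least_support (fun D => sb_supports (sact Y) D y) C
                          /\ length C <= 1.

Lemma U_fin (Y : NomSb) (y : Y) :
  exists C, perm_supports (fun g : Perm => sact Y g) C y.
Proof.
  destruct (sact_fin Y y) as [C HC]; exists C; intros g1 g2 E; apply HC; exact E.
Qed.
Definition nomU (Y : NomSb) : NomPerm :=
  {| pcar := scar Y;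
     pact := fun g => sact Y (perm_sb g);
     pact_id := sact_id Y;
     pact_comp := fun g h => sact_comp Y g h;
     pact_fin := U_fin Y |}.

(* free functor F: (Sb x X)/~ *)
Inductive Fbase (X : NomPerm) : Sb * pcar X -> Sb * pcar X -> Prop :=
| Fb_perm : forall (m : Sb) (g : Perm) (x : X),
    Fbase X (m, pact X g x) (sb_comp m g, x)
| Fb_supp : forall (m m' : Sb) (x : X) (C : list atom),
    perm_supports (pact X) C x -> agree_on C m m' -> Fbase X (m, x) (m', x).

Definition Fsim (X : NomPerm) := clos_refl_sym_trans _ (Fbase X).

Definition Fcar (X : NomPerm) : Type :=
  { P : Sb * pcar X -> Prop | exists p, P = Fsim X p }.

Definition Fclass (X : NomPerm) (p : Sb * pcar X) : Fcar X :=
  exist _ (Fsim X p) (ex_intro _ p eq_refl).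

Definition Frepr (X : NomPerm) (c : Fcar X) : Sb * pcar X :=
  proj1_sig (constructive_indefinite_description _ (proj2_sig c)).

Definition Fact (X : NomPerm) (n : Sb) (c : Fcar X) : Fcar X :=
  Fclass X (sb_comp n (fst (Frepr X c)), snd (Frepr X c)).

Definition unitF (X : NomPerm) (x : X) : Fcar X := Fclass X (sb_id, x).

Definition counitF (Y : NomSb) (c : Fcar (nomU Y)) : scar Y :=
  sact Y (fst (Frepr (nomU Y) c)) (snd (Frepr (nomU Y) c)).

(* On at most one atom every substitution agrees with a permutation (the identity or
   the swap of a and m a).  Hence, in dimension <= 1, a pair (m, x) can be evaluated to
   h . x for any permutation h agreeing with m on a support of x; this evaluation is
   invariant under ~ and inverts the unit.  Dually, if y has an Sb-support with at most
   one atom then every Perm-support of y is an Sb-support (if the atom is missing from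
   the Perm-support, swapping it with a fresh atom shows that y is a constant), so
   [m, y] |-> m . y is well defined, and [m, y] ~ [id, m . y]. *)

From Stdlib Require Import List Relations Arith Lia.
From Stdlib Require Import ClassicalEpsilon FunctionalExtensionality PropExtensionality.
From Stdlib Require Import ProofIrrelevance.
Import ListNotations.

Lemma exists_fresh (l : list atom) : exists b, ~ In b l.
Proof.
  exists (S (list_max l)); intro Hin.
  assert (Hle : Forall (fun k => k <= list_max l) l) by (apply list_max_le; reflexivity).
  rewrite Forall_forall in Hle; specialize (Hle _ Hin); lia.
Qed.

Definition swap_fun (a b c : atom) : atom :=
  if Nat.eq_dec c a then b else if Nat.eq_dec c b then a else c.

Lemma swap_fun_fin a b : fin_nontriv (swap_fun a b).
Proof.
  exists [a; b]; intros c Hc; unfold swap_fun.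
  destruct (Nat.eq_dec c a), (Nat.eq_dec c b); subst; simpl in Hc; tauto.
Qed.

Lemma swap_funK a b c : swap_fun a b (swap_fun a b c) = c.
Proof. unfold swap_fun; repeat (destruct Nat.eq_dec; subst; try lia). Qed.

Definition swap_sb (a b : atom) : Sb := mkSb (swap_fun a b) (swap_fun_fin a b).

Lemma swap_sb_bij a b : is_bij (sb_fun (swap_sb a b)).
Proof.
  split; simpl.
  - intros c d E; rewrite <- (swap_funK a b c), <- (swap_funK a b d), E; reflexivity.
  - intros d; exists (swap_fun a b d); apply swap_funK.
Qed.

Definition swap (a b : atom) : Perm := mkPerm (swap_sb a b) (swap_sb_bij a b).

Lemma swap_l a b : swap a b a = b.
Proof. simpl; unfold swap_fun; destruct Nat.eq_dec; lia. Qed.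

Lemma swap_other a b c : c <> a -> c <> b -> swap a b c = c.
Proof. simpl; unfold swap_fun; intros; repeat destruct Nat.eq_dec; lia. Qed.

Definition subst1_fun (a b c : atom) : atom := if Nat.eq_dec c a then b else c.

Lemma subst1_fun_fin a b : fin_nontriv (subst1_fun a b).
Proof.
  exists [a]; intros c Hc; unfold subst1_fun.
  destruct Nat.eq_dec; subst; simpl in Hc; tauto.
Qed.

Definition subst1 (a b : atom) : Sb := mkSb (subst1_fun a b) (subst1_fun_fin a b).

Lemma perm_agree_on_le1 (C : list atom) (m : Sb) :
  length C <= 1 -> exists h : Perm, agree_on C m h.
Proof.
  destruct C as [|a [|b C]]; simpl; intros Hlen; try lia.
  - exists perm_id; intros a [].
  - exists (swap a (m a)); intros c [<-|[]]; symmetry; apply swap_l.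
Qed.

Lemma perm_supports_act (X : NomPerm) (g : Perm) C (x : X) :
  perm_supports (pact X) C x -> perm_supports (pact X) (map g C) (pact X g x).
Proof.
  intros HC k1 k2 Hk; rewrite <- !pact_comp; apply HC.
  intros a Ha; apply Hk, in_map, Ha.
Qed.

Lemma sb_supports_perm_supports (Y : NomSb) C (y : Y) :
  sb_supports (sact Y) C y -> perm_supports (pact (nomU Y)) C y.
Proof. intros HC g1 g2; apply HC. Qed.

Lemma sact_subst1_of_swap_fixed (Y : NomSb) (y : Y) a b :
  a <> b -> sb_supports (sact Y) [a] y -> sact Y (swap a b) y = y ->
  forall m, sact Y m y = sact Y (subst1 a b) y.
Proof.
  intros Hab Ha Hsw m.
  transitivity (sact Y (subst1 a (m a)) y).
  { apply Ha; intros c [<-|[]]; simpl; unfold subst1_fun; destruct Nat.eq_dec; lia. }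
  (* m . y = (k o swap a b) . y, and (k o swap a b) a = b whenever k fixes b *)
  rewrite <- Hsw, <- !sact_comp; apply Ha; intros c [<-|[]]; simpl.
  unfold subst1_fun, swap_fun; repeat destruct Nat.eq_dec; lia.
Qed.

Lemma sb_supports_of_perm_supports (Y : NomSb) (y : Y) L C :
  length L <= 1 -> sb_supports (sact Y) L y ->
  perm_supports (pact (nomU Y)) C y -> sb_supports (sact Y) C y.
Proof.
  intros Hlen HL HC.
  destruct L as [|a [|? ?]]; simpl in Hlen; try lia.
  - intros m1 m2 _; apply HL; intros ? [].
  - destruct (in_dec Nat.eq_dec a C) as [HaC|HaC].
    { intros m1 m2 Hm; apply HL; intros c [<-|[]]; apply Hm, HaC. }
    destruct (exists_fresh (a :: C)) as [b Hb].
    assert (Hab : a <> b) by (intros ->; apply Hb; left; reflexivity).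
    assert (Hsw : sact Y (swap a b) y = y).
    { rewrite <- (sact_id Y y) at 2; apply (HC (swap a b) perm_id).
      intros c Hc; apply (swap_other a b c); intros ->; [exact (HaC Hc) | apply Hb; right; exact Hc]. }
    intros m1 m2 _.
    rewrite (sact_subst1_of_swap_fixed Y y a b Hab HL Hsw m1).
    rewrite (sact_subst1_of_swap_fixed Y y a b Hab HL Hsw m2); reflexivity.
Qed.

Section Quotient.
Variable X : NomPerm.

Lemma Fsim_ext (m m' : Sb) (x : X) : (forall a, m a = m' a) -> Fsim X (m, x) (m', x).
Proof.
  intros E; destruct (pact_fin X x) as [C HC].
  apply rst_step; apply Fb_supp with C; [exact HC | intros a _; apply E].
Qed.

Lemma Fsim_comp_l (n : Sb) p q : Fsim X p q ->
  Fsim X (sb_comp n (fst p), snd p) (sb_comp n (fst q), snd q).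
Proof.
  induction 1 as [p q [m g x | m m' x C HC Hm] | | |].
  - eapply rst_trans; [apply rst_step, Fb_perm | apply Fsim_ext; reflexivity].
  - apply rst_step; apply Fb_supp with C; [exact HC | intros a Ha; simpl; rewrite Hm; auto].
  - apply rst_refl.
  - apply rst_sym; assumption.
  - eapply rst_trans; eassumption.
Qed.

Lemma Fclass_eq p q : Fsim X p q -> Fclass X p = Fclass X q.
Proof.
  intros Hpq; apply subset_eq_compat.
  apply functional_extensionality; intro r; apply propositional_extensionality.
  split; intro H; eapply rst_trans; eauto using rst_sym.
Qed.

Lemma Fsim_of_Fclass_eq p q : Fclass X p = Fclass X q -> Fsim X p q.
Proof.
  intros E; apply (f_equal (@proj1_sig _ _)) in E; simpl in E.
  rewrite E; apply rst_refl.
Qed.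

Lemma Frepr_spec c : proj1_sig c = Fsim X (Frepr X c).
Proof.
  unfold Frepr; destruct (constructive_indefinite_description _ _) as [q Hq]; exact Hq.
Qed.

Lemma Fclass_repr c : Fclass X (Frepr X c) = c.
Proof.
  pose proof (Frepr_spec c) as H; destruct c as [P HP]; simpl in H.
  apply subset_eq_compat; symmetry; exact H.
Qed.

Lemma Fsim_repr p : Fsim X p (Frepr X (Fclass X p)).
Proof.
  pose proof (Frepr_spec (Fclass X p)) as H; simpl in H.
  rewrite (equal_f H); apply rst_refl.
Qed.

Lemma Fact_class (n : Sb) p : Fact X n (Fclass X p) = Fclass X (sb_comp n (fst p), snd p).
Proof. apply Fclass_eq, rst_sym, Fsim_comp_l, Fsim_repr. Qed.

Definition perm_eval (p : Sb * X) (y : X) : Prop :=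
  exists C (h : Perm), perm_supports (pact X) C (snd p) /\ agree_on C (fst p) h
                       /\ y = pact X h (snd p).

Lemma perm_eval_id (x : X) : perm_eval (sb_id, x) x.
Proof.
  destruct (pact_fin X x) as [C HC].
  exists C, perm_id; split; [exact HC | split; [intros a _; reflexivity | symmetry; apply pact_id]].
Qed.

Lemma Fsim_perm_eval p y : perm_eval p y -> Fsim X p (sb_id, y).
Proof.
  destruct p as [m x]; intros (C & h & HC & Hh & ->); simpl in *.
  eapply rst_trans; [apply rst_step, Fb_supp with C; eassumption |].
  eapply rst_trans; [apply Fsim_ext with (m' := sb_comp sb_id h); reflexivity |].
  apply rst_sym, rst_step, Fb_perm.
Qed.

Lemma unitF_equivariant (g : Perm) (x : X) : unitF X (pact X g x) = Fact X g (unitF X x).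
Proof.
  unfold unitF; rewrite Fact_class; apply Fclass_eq; simpl.
  eapply rst_trans; [apply rst_step, Fb_perm | apply Fsim_ext; reflexivity].
Qed.

End Quotient.

Section Unit.
Variable X : NomPerm.
Hypothesis dimX : dim_le1_perm X.

Lemma perm_eval_functional p y y' : perm_eval X p y -> perm_eval X p y' -> y = y'.
Proof.
  intros (C & h & HC & Hh & ->) (C' & h' & HC' & Hh' & ->).
  destruct (dimX (snd p)) as (L & [HL HLmin] & _).
  apply HL; intros a Ha.
  rewrite <- Hh, <- Hh'; [reflexivity | apply (HLmin _ HC') | apply (HLmin _ HC)]; exact Ha.
Qed.

Lemma perm_eval_total p : exists y, perm_eval X p y.
Proof.
  destruct p as [m x]; destruct (dimX x) as (L & [HL _] & Hlen).
  destruct (perm_agree_on_le1 L m Hlen) as [h Hh].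
  exists (pact X h x), L, h; auto.
Qed.

Lemma perm_eval_agree (m m' : Sb) x C y : perm_supports (pact X) C x -> agree_on C m m' ->
  perm_eval X (m, x) y -> perm_eval X (m', x) y.
Proof.
  intros HC Hm (C' & h & HC' & Hh & ->); simpl in *.
  destruct (dimX x) as (L & [HL HLmin] & _).
  exists L, h; split; [exact HL | split; [| reflexivity]].
  intros a Ha; rewrite <- Hm by exact (HLmin _ HC _ Ha); exact (Hh _ (HLmin _ HC' _ Ha)).
Qed.

Lemma perm_eval_act (m : Sb) (g : Perm) x y :
  perm_eval X (sb_comp m g, x) y -> perm_eval X (m, pact X g x) y.
Proof.
  intros (C & h & HC & Hh & ->); simpl in *.
  destruct (dimX x) as (L & [HL HLmin] & Hlen).
  assert (Hlen' : length (map g L) <= 1) by (rewrite length_map; exact Hlen).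
  destruct (perm_agree_on_le1 _ m Hlen') as [k Hk].
  exists (map g L), k; split; [apply perm_supports_act, HL | split; [exact Hk |]].
  simpl; rewrite <- pact_comp; apply HL; intros a Ha; simpl.
  rewrite <- Hh by exact (HLmin _ HC _ Ha); apply Hk, in_map, Ha.
Qed.

Lemma perm_eval_Fbase p q y : Fbase X p q -> perm_eval X p y <-> perm_eval X q y.
Proof.
  intros [m g x | m m' x C HC Hm]; split.
  - intros Hy; destruct (perm_eval_total (sb_comp m g, x)) as [y0 Hy0].
    rewrite (perm_eval_functional _ _ _ Hy (perm_eval_act _ _ _ _ Hy0)); exact Hy0.
  - apply perm_eval_act.
  - apply perm_eval_agree with C; assumption.
  - apply perm_eval_agree with C; [assumption | intros a Ha; symmetry; auto].
Qed.

Lemma perm_eval_Fsim p q y : Fsim X p q -> perm_eval X p y <-> perm_eval X q y.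
Proof.
  intros Hpq; revert y; induction Hpq as [p q Hpq | | p q _ IH | p q r _ IH1 _ IH2]; intro y.
  - apply perm_eval_Fbase, Hpq.
  - reflexivity.
  - symmetry; apply IH.
  - rewrite IH1; apply IH2.
Qed.

Lemma unitF_injective (x x' : X) : unitF X x = unitF X x' -> x = x'.
Proof.
  intros E; apply Fsim_of_Fclass_eq in E.
  apply (perm_eval_functional (sb_id, x')); [| apply perm_eval_id].
  apply (perm_eval_Fsim _ _ _ E), perm_eval_id.
Qed.

Lemma unitF_surjective (c : Fcar X) : exists x, unitF X x = c.
Proof.
  rewrite <- (Fclass_repr X c); destruct (perm_eval_total (Frepr X c)) as [y Hy].
  exists y; symmetry; apply Fclass_eq, Fsim_perm_eval, Hy.
Qed.

End Unit.

Section Counit.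
Variable Y : NomSb.
Hypothesis dimY : dim_le1_sb Y.

Lemma sact_Fsim p q : Fsim (nomU Y) p q -> sact Y (fst p) (snd p) = sact Y (fst q) (snd q).
Proof.
  induction 1 as [p q [m g x | m m' x C HC Hm] | | |]; simpl.
  - rewrite sact_comp; reflexivity.
  - destruct (dimY x) as (L & [HL _] & Hlen).
    exact (sb_supports_of_perm_supports Y x L C Hlen HL HC m m' Hm).
  - reflexivity.
  - symmetry; assumption.
  - etransitivity; eassumption.
Qed.

Lemma counitF_class p : counitF Y (Fclass (nomU Y) p) = sact Y (fst p) (snd p).
Proof. symmetry; apply sact_Fsim, Fsim_repr. Qed.

Lemma Fsim_sact (m : Sb) (y : Y) : Fsim (nomU Y) (m, y) (sb_id, sact Y m y).
Proof.
  destruct (dimY y) as (L & [HL _] & Hlen).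
  destruct (perm_agree_on_le1 L m Hlen) as [h Hh].
  replace (sact Y m y) with (sact Y h y) by (symmetry; apply HL, Hh).
  apply Fsim_perm_eval; exists L, h; split; [apply sb_supports_perm_supports, HL | auto].
Qed.

Lemma counitF_injective (c c' : Fcar (nomU Y)) : counitF Y c = counitF Y c' -> c = c'.
Proof.
  rewrite <- (Fclass_repr _ c), <- (Fclass_repr _ c'), !counitF_class.
  destruct (Frepr _ c) as [m y], (Frepr _ c') as [m' y']; simpl; intros E.
  rewrite (Fclass_eq _ _ _ (Fsim_sact m y)), (Fclass_eq _ _ _ (Fsim_sact m' y')), E.
  reflexivity.
Qed.

Lemma counitF_surjective (y : Y) : exists c, counitF Y c = y.
Proof.
  exists (Fclass (nomU Y) (sb_id, y)); rewrite counitF_class; apply sact_id.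
Qed.

Lemma counitF_equivariant (n : Sb) (c : Fcar (nomU Y)) :
  counitF Y (Fact (nomU Y) n c) = sact Y n (counitF Y c).
Proof.
  rewrite <- (Fclass_repr _ c), Fact_class, !counitF_class; apply sact_comp.
Qed.

End Counit.

Theorem mainTheorem6 (X : NomPerm) (Y : NomSb) :
  (dim_le1_perm X ->
     is_bij (unitF X) /\
     (forall (g : Perm) (x : X), unitF X (pact X g x) = Fact X g (unitF X x)))
  /\
  (dim_le1_sb Y ->
     is_bij (counitF Y) /\
     (forall (n : Sb) (c : Fcar (nomU Y)), counitF Y (Fact (nomU Y) n c) = sact Y n (counitF Y c))).
Proof.
  split; intros dim.
  - split; [split|].
    + exact (unitF_injective X dim).
    + exact (unitF_surjective X dim).
    + exact (unitF_equivariant X).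
  - split; [split|].
    + exact (counitF_injective Y dim).
    + exact (counitF_surjective Y dim).
    + exact (counitF_equivariant Y dim).
Qed.
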